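(* Let $\mathcal{P}=\bigcup_n \mathcal{P}_n$ be a p-quasirandom family of permutations. Then for every fixed word $\sigma=\sigma_1\ldots\sigma_k$ of $k$ distinct positive integers, the probability that a uniformly random $\pi\in\mathcal{P}_n$ contains $\sigma$ as a subsequence tends to $1/k!$ as $n\to\infty$ (over those $n$ with $\mathcal{P}_n\neq\emptyset$).
   Context: A permutation $\pi=\pi_1\ldots\pi_n\in\mathcal{S}_n$ contains a word $\sigma=\sigma_1\ldots\sigma_k$ of distinct letters as a subsequence if there are indices $i_1<\cdots<i_k$ with $\pi_{i_1}=\sigma_1,\ldots,\pi_{i_k}=\sigma_k$. Let $\mathcal{P}_n\subseteq\mathcal{S}_n$ be nonempty for infinitely many $n$ and $\mathcal{P}=\bigcup_n\mathcal{P}_n$. For $\tau\in\mathcal{S}_k$ and $\mathcal{P}_n\ne\emptyset$, let $f(n,\tau)$ be the fraction of permutations in $\mathcal{P}_n$ containing $\tau$ as a subsequence. $\mathcal{P}$ is p-quasirandom if for every $k\ge1$, $\lim_{n\to\infty}\max_{\tau\in\mathcal{S}_k}|f(n,\tau)-1/k!|=0$, the limit taken over $n$ with $\mathcal{P}_n\neq\emptyset$. *)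

From mathcomp Require Import all_boot all_order all_fingroup all_algebra.
Set Implicit Arguments. Unset Strict Implicit. Unset Printing Implicit Defensive.
Import Order.TTheory GRing.Theory Num.Theory.

Definition oneline (n : nat) (pi : 'S_n) : seq nat :=
  [seq (pi i).+1 | i <- enum 'I_n].

Definition contains_word (n : nat) (pi : 'S_n) (w : seq nat) : bool :=
  subseq w (oneline pi).

Definition perm_family := forall n : nat, {set 'S_n}.

Definition inf_nonempty (P : perm_family) : Prop :=
  forall N : nat, exists n, (N <= n)%N /\ P n != set0.

Definition pfrac (P : perm_family) (n : nat) (w : seq nat) : rat :=
  (#|[set pi in P n | contains_word pi w]|%:R / #|P n|%:R)%R.

Definition p_quasirandom (P : perm_family) : Prop :=
  forall k : nat, (1 <= k)%N ->
  forall eps : rat, (0 < eps)%R ->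
  exists N : nat, forall n : nat, (N <= n)%N -> P n != set0 ->
  forall tau : 'S_k, (`|pfrac P n (oneline tau) - (k`!%:R)^-1| < eps)%R.

From mathcomp Require Import all_boot all_order all_fingroup all_algebra.
Import Order.TTheory GRing.Theory Num.Theory.
Set Implicit Arguments. Unset Strict Implicit. Unset Printing Implicit Defensive.

(* Let K exceed every letter of sigma.  For n >= K, the values 1..K of pi in S_n
   appear in pi in the order of a permutation tau in S_K, its pattern; pi contains
   sigma iff its pattern does, and pi contains tau iff tau is its pattern.  Hence
   f(n, sigma) is the sum of f(n, tau) over the set C of tau in S_K containing
   sigma, which tends to |C| / K!.  Finally |C| * |sigma|! = K!: every permutation
   of {1..K} contains exactly one ordering of the letters of sigma, and relabelling
   these letters shows that all orderings occur equally often. *)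

Section SubseqCount.
Variable T : eqType.
Implicit Types (a b s t : seq T) (x : T).

(* The bijection sending [a]`_i to [b]`_i, and fixing every x outside [a]. *)
Definition relabel a b x : T := nth x b (index x a).

Lemma relabelK a b : uniq a -> uniq b -> perm_eq a b ->
  cancel (relabel a b) (relabel b a).
Proof.
move=> ua ub pab x; have sz := perm_size pab; rewrite /relabel.
case xa: (x \in a).
  have ilt : index x a < size b by rewrite -sz index_mem.
  by rewrite index_uniq // (set_nth_default x) ?nth_index // index_mem.
have xb : x \notin b by rewrite -(perm_mem pab) xa.
have -> : nth x b (index x a) = x by rewrite nth_default // memNindex ?xa // sz.
by rewrite nth_default // memNindex // sz.
Qed.

Lemma map_relabel a b : uniq a -> size a = size b -> map (relabel a b) a = b.
Proof.
case: b => [|y b] ua sz; first by case: a ua sz.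
apply: (@eq_from_nth _ y); first by rewrite size_map sz.
move=> i; rewrite size_map => ilt; rewrite (nth_map y) // /relabel index_uniq //.
by apply: set_nth_default; rewrite -sz.
Qed.

Lemma relabel_mem a b s x : perm_eq a b -> {subset b <= s} ->
  (relabel a b x \in s) = (x \in s).
Proof.
move=> pab bs; have sz := perm_size pab; rewrite /relabel.
case xa: (x \in a); last by rewrite nth_default // memNindex ?xa // sz.
have xs : x \in s by apply: bs; rewrite -(perm_mem pab).
by rewrite xs bs // mem_nth // -sz index_mem.
Qed.

Lemma perm_map_closed (g : T -> T) s t : injective g -> uniq s ->
  {homo g : x / x \in s} -> perm_eq t s -> perm_eq (map g t) s.
Proof.
move=> ginj us gs pts; have umt : uniq (map g t).
  by rewrite (map_inj_uniq ginj) (perm_uniq pts).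
have sub : {subset map g t <= s}.
  by move=> y /mapP [x xt ->]; apply: gs; rewrite -(perm_mem pts).
apply: uniq_perm => //; apply: (uniq_min_size umt sub _).2.
by rewrite size_map (perm_size pts).
Qed.

Lemma perm_map_permutations (g : T -> T) s : injective g -> uniq s ->
  {homo g : x / x \in s} -> perm_eq (map (map g) (permutations s)) (permutations s).
Proof.
move=> ginj us gs; have uT : uniq (map (map g) (permutations s)).
  by rewrite (map_inj_uniq (inj_map ginj)) permutations_uniq.
have sub : {subset map (map g) (permutations s) <= permutations s}.
  move=> _ /mapP [t ts ->]; rewrite mem_permutations.
  by apply: perm_map_closed => //; rewrite -mem_permutations.
apply: uniq_perm; rewrite ?permutations_uniq //.
by apply: (uniq_min_size uT sub _).2; rewrite size_map.
Qed.

Lemma subseq_map_inj (U : eqType) (f : T -> U) s t : injective f ->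
  subseq (map f s) (map f t) = subseq s t.
Proof.
move=> finj; apply/idP/idP; last exact: map_subseq.
case/subseqP => m sz e; apply/subseqP; exists m; first by rewrite sz size_map.
by apply: (inj_map finj); rewrite map_mask.
Qed.

Lemma count_subseq_relabel s sg rho : uniq s -> uniq sg -> {subset sg <= s} ->
  perm_eq rho sg ->
  count (subseq rho) (permutations s) = count (subseq sg) (permutations s).
Proof.
move=> us usg sgs prs; have ur : uniq rho by rewrite (perm_uniq prs).
have ginj : injective (relabel rho sg) by apply: can_inj (relabelK ur usg prs).
have gs : {homo relabel rho sg : x / x \in s} by move=> x; rewrite relabel_mem.
rewrite -[in RHS](seq.permP (perm_map_permutations ginj us gs)) count_map.
apply: eq_count => t /=.
by rewrite -[X in subseq X (map _ _)](map_relabel ur (perm_size prs)) subseq_map_inj.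
Qed.

Lemma count_permutations_subseq_eq1 s sg : uniq s -> uniq sg -> {subset sg <= s} ->
  count (subseq^~ s) (permutations sg) = 1.
Proof.
move=> us usg sgs; set r := [seq x <- s | x \in sg].
have prs : perm_eq r sg.
  apply: uniq_perm; rewrite ?filter_uniq // => x.
  by rewrite mem_filter andb_idr //; apply: sgs.
transitivity (count_mem r (permutations sg)); last first.
  by rewrite count_uniq_mem ?permutations_uniq // mem_permutations prs.
apply: eq_in_count => rho; rewrite mem_permutations => /perm_mem rho_sg /=.
by rewrite eq_sym; apply/(subseq_uniqP us)/eqP; rewrite (eq_filter rho_sg).
Qed.

Lemma count_subseq_permutations s sg : uniq s -> uniq sg -> {subset sg <= s} ->
  count (subseq sg) (permutations s) * (size sg)`! = (size s)`!.
Proof.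
move=> us usg sgs; set S := permutations s.
have countE (U : Type) (p : pred U) r : count p r = \sum_(u <- r) p u.
  by rewrite -sum1_count big_mkcond.
transitivity (\sum_(rho <- permutations sg) count (subseq rho) S).
  rewrite (eq_big_seq (fun=> count (subseq sg) S)); last first.
    move=> rho; rewrite mem_permutations; exact: count_subseq_relabel.
  by rewrite big_const_seq count_predT iter_addn_0 size_permutations // mulnC.
rewrite -(size_permutations us) -/S -sum1_size.
under eq_bigr do rewrite countE.
rewrite exchange_big /=; apply: eq_big_seq => t; rewrite mem_permutations => pts.
rewrite -countE count_permutations_subseq_eq1 ?(perm_uniq pts) // => x xsg.
by rewrite (perm_mem pts) sgs.
Qed.

End SubseqCount.

Lemma nth_oneline n (pi : 'S_n) (i : 'I_n) : nth 0 (oneline pi) i = (pi i).+1.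
Proof. by rewrite /oneline (nth_map i) ?size_enum_ord // nth_ord_enum. Qed.

Lemma oneline_inj n : injective (@oneline n).
Proof.
move=> pi rho e; apply/permP => i; apply: val_inj; apply: succn_inj.
by rewrite -!nth_oneline e.
Qed.

Lemma oneline_uniq n (pi : 'S_n) : uniq (oneline pi).
Proof.
rewrite /oneline map_inj_uniq ?enum_uniq // => i j /succn_inj /val_inj.
exact: perm_inj.
Qed.

Lemma perm_oneline_iota n (pi : 'S_n) : perm_eq (oneline pi) (iota 1 n).
Proof.
apply: uniq_perm; rewrite ?oneline_uniq ?iota_uniq //.
have sub : {subset oneline pi <= iota 1 n}.
  by move=> _ /mapP [i _ ->]; rewrite mem_iota /= add1n ltnS.
apply: (uniq_min_size (oneline_uniq pi) sub _).2.
by rewrite size_iota size_map size_enum_ord.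
Qed.

Lemma perm_oneline_permutations n :
  perm_eq (map (@oneline n) (enum 'S_n)) (permutations (iota 1 n)).
Proof.
have u : uniq (map (@oneline n) (enum 'S_n)).
  by rewrite (map_inj_uniq (@oneline_inj n)) enum_uniq.
have sub : {subset map (@oneline n) (enum 'S_n) <= permutations (iota 1 n)}.
  by move=> _ /mapP [pi _ ->]; rewrite mem_permutations perm_oneline_iota.
apply: uniq_perm; rewrite ?permutations_uniq //; apply: (uniq_min_size u sub _).2.
by rewrite size_map -cardE card_Sn size_permutations ?iota_uniq // size_iota.
Qed.

Lemma oneline_onto n s : perm_eq s (iota 1 n) -> exists tau : 'S_n, oneline tau = s.
Proof.
rewrite -mem_permutations -(perm_mem (perm_oneline_permutations n)).
by case/mapP => tau _ ->; exists tau.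
Qed.

Lemma card_contains_word K sg : uniq sg -> {subset sg <= iota 1 K} ->
  #|[set tau : 'S_K | contains_word tau sg]| * (size sg)`! = K`!.
Proof.
move=> usg sgK; rewrite -sum1dep_card sum1_count [index_enum _]unlock -enumT.
rewrite -[count _ _]/(count (subseq sg \o @oneline K) (enum 'S_K)) -count_map.
rewrite (seq.permP (perm_oneline_permutations K)).
by rewrite count_subseq_permutations ?iota_uniq // size_iota.
Qed.

Definition restrict_values K n (pi : 'S_n) : seq nat :=
  [seq x <- oneline pi | x \in iota 1 K].

(* Junk value [1] when [n < K]. *)
Definition pattern K n (pi : 'S_n) : 'S_K :=
  odflt 1%g [pick tau : 'S_K | oneline tau == restrict_values K pi].

Lemma perm_restrict_values K n (pi : 'S_n) : K <= n ->
  perm_eq (restrict_values K pi) (iota 1 K).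
Proof.
move=> Kn; apply: uniq_perm; rewrite ?filter_uniq ?oneline_uniq ?iota_uniq // => x.
rewrite mem_filter (perm_mem (perm_oneline_iota pi)) !mem_iota andb_idr //.
by case/andP=> -> /leq_trans; apply; rewrite leq_add2l.
Qed.

Lemma oneline_pattern K n (pi : 'S_n) : K <= n ->
  oneline (pattern K pi) = restrict_values K pi.
Proof.
move=> Kn; rewrite /pattern; case: pickP => [tau /eqP // | no_tau].
have [tau e] := oneline_onto (perm_restrict_values pi Kn).
by have := no_tau tau; rewrite e eqxx.
Qed.

Lemma contains_oneline K n (pi : 'S_n) (tau : 'S_K) : K <= n ->
  contains_word pi (oneline tau) = (pattern K pi == tau).
Proof.
move=> Kn; rewrite -(inj_eq (@oneline_inj K)) oneline_pattern // eq_sym /contains_word.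
rewrite /restrict_values -(eq_filter (perm_mem (perm_oneline_iota tau))).
exact/(sameP (subseq_uniqP (oneline_uniq pi)))/eqP.
Qed.

Lemma contains_pattern K n (pi : 'S_n) sg : K <= n -> {subset sg <= iota 1 K} ->
  contains_word pi sg = contains_word (pattern K pi) sg.
Proof.
move=> Kn sgK; rewrite [in RHS]/contains_word oneline_pattern // subseq_filter.
by rewrite (introT allP sgK).
Qed.

Lemma card_contains_pattern K n (A : {set 'S_n}) sg : K <= n -> {subset sg <= iota 1 K} ->
  #|[set pi in A | contains_word pi sg]| =
  \sum_(tau in [set tau : 'S_K | contains_word tau sg])
     #|[set pi in A | contains_word pi (oneline tau)]|.
Proof.
move=> Kn sgK; rewrite -sum1dep_card.
rewrite (partition_big (@pattern K n) (mem [set tau : 'S_K | contains_word tau sg]))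
  => [|pi]; last by rewrite !inE -contains_pattern // => /andP[].
apply: eq_bigr => tau /[!inE] tau_sg; rewrite -sum1dep_card.
apply: eq_bigl => pi; rewrite contains_oneline // -andbA; congr (_ && _).
by case: eqP => [pat | _]; rewrite ?andbF // andbT (contains_pattern pi Kn sgK) pat.
Qed.

Lemma pfrac_pattern_sum (P : perm_family) n K sg : K <= n -> {subset sg <= iota 1 K} ->
  pfrac P n sg = (\sum_(tau in [set tau : 'S_K | contains_word tau sg])
                    pfrac P n (oneline tau))%R.
Proof.
by move=> Kn sgK; rewrite /pfrac (card_contains_pattern _ Kn sgK) natr_sum mulr_suml.
Qed.

Lemma ltr_norm_sumB_const (R : numDomainType) (I : finType) (A : {pred I})
    (F : I -> R) (a e : R) :
  0 < #|A| -> (forall i, i \in A -> `|F i - a| < e)%R ->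
  (`|\sum_(i in A) F i - a *+ #|A| | < e *+ #|A|)%R.
Proof.
move=> /card_gt0P [i0 i0A] close; rewrite -!sumr_const -sumrB.
apply: le_lt_trans (ler_norm_sum _ _ _) _; apply: ltr_sum => //.
by apply/hasP; exists i0.
Qed.

Theorem mainTheorem1 (P : perm_family) :
  inf_nonempty P -> p_quasirandom P ->
  forall sigma : seq nat, uniq sigma -> all (fun x => (0 < x)%N) sigma ->
  forall eps : rat, (0 < eps)%R ->
  exists N : nat, forall n : nat, (N <= n)%N -> P n != set0 ->
  (`|pfrac P n sigma - ((size sigma)`!%:R)^-1| < eps)%R.
Proof.
move=> _ quasi sg usg sg_pos eps eps_gt0.
pose K := (\max_(x <- sg) x).+1.
have sgK : {subset sg <= iota 1 K}.
  move=> x xsg; rewrite mem_iota (allP sg_pos) //= add1n ltnS leqW //.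
  exact: (leq_bigmax_seq (F := id)).
pose C := [set tau : 'S_K | contains_word tau sg].
have cardC : #|C| * (size sg)`! = K`! := card_contains_word usg sgK.
have C_gt0 : 0 < #|C| by move: (fact_gt0 K); rewrite -cardC muln_gt0 => /andP[].
have e_gt0 : (0 < eps / #|C|%:R)%R by rewrite divr_gt0 ?ltr0n.
have [N closeN] := quasi K isT _ e_gt0.
exists (maxn N K) => n; rewrite geq_max => /andP[Nn Kn] Pn.
have -> : eps = (eps / #|C|%:R *+ #|C|)%R by rewrite -mulr_natr divfK ?pnatr_eq0 -?lt0n.
have -> : ((size sg)`!%:R^-1 = K`!%:R^-1 *+ #|C| :> rat)%R.
  rewrite -cardC natrM invfM -mulrnAl -(mulr_natr _ #|C|).
  by rewrite mulVf ?mul1r // pnatr_eq0 -lt0n.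
rewrite (pfrac_pattern_sum P Kn sgK).
by apply: ltr_norm_sumB_const => // tau _; apply: closeN.
Qed.
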